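(* Let $\Gamma$ be a finite simple graph, let $g\in G(\Gamma)$ be non-split and cyclically reduced, and let $v_0\in\mathrm{supp}(g)$. Then there exist a $v_0$-conical element $p\in G(\Gamma)$ and elements $a,b\in G(\Gamma)$ such that $$g=apa^{-1}=b^{-1}pb,$$ where $g^k=ab$ holds and is a geodesic decomposition for some $0\le k\le |V(\Gamma)|-1$. In particular, if $n\ge|V(\Gamma)|$, then $g^n=ap^{n-k}b$ is a geodesic decomposition (i.e. $|g^n|=|a|+(n-k)|p|+|b|$).
   Context: $G(\Gamma)=\langle v\in V(\Gamma)\mid [v_i,v_j]=1 \text{ if } \{v_i,v_j\}\notin E(\Gamma)\rangle$. $|g|$ is word length with respect to $V(\Gamma)$; a reduced word is a shortest representative. $\mathrm{supp}(g)$ is the set of generators $v$ such that $v^{\pm1}$ appears in a reduced word for $g$. $g$ is non-split if $\mathrm{supp}(g)$ spans a connected subgraph of $\Gamma$. $g$ is cyclically reduced if it has minimal word length in its conjugacy class. A decomposition $g=g_1\cdots g_k$ is geodesic if $|g|=\sum|g_i|$. The set of starting generators $S(g)$ is the set of $v\in V(\Gamma)$ such that $g=v^{\epsilon}h$ is geodesic for some $\epsilon=\pm1$ and $h\in G(\Gamma)$. $g$ is $v_0$-conical if $S(g)=\{v_0\}$. *)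

From mathcomp Require Import all_boot.
From mathcomp Require Import boolp.
From Stdlib Require Import Relations.

Set Implicit Arguments.
Unset Strict Implicit.
Unset Printing Implicit Defensive.

(* Vertex set: a finType T; simple graph: symmetric irreflexive e : rel T.
   G(Gamma) = < V | [u,v] = 1 whenever {u,v} is NOT an edge >.
   Elements of G(Gamma) are represented by words over letters (v, s) where
   s = true means v and s = false means v^-1; two words represent the same
   group element iff they are related by [weq e]. *)

Section RAAG.
Variables (T : finType) (e : rel T).

Definition letter := (T * bool)%type.
Definition word := seq letter.

Definition linv (x : letter) : letter := (x.1, ~~ x.2).

Definition winv (w : word) : word := rev (map linv w).
Definition wpow (w : word) (n : nat) : word := flatten (nseq n w).

Inductive wstep : word -> word -> Prop :=
| wstep_cancel (w1 w2 : word) (x : letter) :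
    wstep (w1 ++ [:: x; linv x] ++ w2) (w1 ++ w2)
| wstep_comm (w1 w2 : word) (x y : letter) :
    ~~ e x.1 y.1 -> wstep (w1 ++ [:: x; y] ++ w2) (w1 ++ [:: y; x] ++ w2).

Definition weq : word -> word -> Prop := clos_refl_sym_trans word wstep.

Lemma wlen_ex (w : word) :
  exists n, `[< exists w', weq w w' /\ size w' = n >].
Proof. exists (size w); apply/asboolP; exists w; split => //; exact: rst_refl. Qed.

Definition wlen (w : word) : nat := ex_minn (wlen_ex w).

Definition supp (g : word) (v : T) : Prop :=
  exists w', weq g w' /\ size w' = wlen g /\ v \in map fst w'.

Definition nonsplit (g : word) : Prop :=
  forall u v, supp g u -> supp g v ->
    clos_refl_trans T (fun x y => e x y /\ supp g x /\ supp g y) u v.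

Definition cyc_reduced (g : word) : Prop :=
  forall h : word, wlen g <= wlen (h ++ g ++ winv h).

Definition geod2 (g a b : word) : Prop :=
  weq g (a ++ b) /\ wlen g = wlen a + wlen b.

Definition start_gen (g : word) (v : T) : Prop :=
  exists (eps : bool) (h : word), geod2 g [:: (v, eps)] h.

Definition conical (v0 : T) (p : word) : Prop :=
  forall v, start_gen p v <-> v = v0.

End RAAG.

(* Replace g by a reduced word w; cyclic reduction makes w ++ w, hence every
   power of w, reduced.  Scan a word from left to right, putting a letter into
   the cone if its vertex is v0 or does not commute with a vertex already in
   the cone, and into the free part otherwise.  Each cone letter commutes with
   all later free letters, so the word equals its free part followed by its
   cone part.  As supp(g) is connected, every vertex of w is at distance at
   most |V|-1 from v0, so after k = |V|-1 copies of w every letter of w joins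
   the cone.  Writing w^k = a b (free part, cone part), the free part of w a is
   again a, i.e. w a = a p with p the cone part of w a.  Then g = a p a^-1,
   p b = b w and w^n = a p^(n-k) b, and all these words are reduced pieces of
   reduced words, hence geodesic.  Every letter of p is v0 or fails to commute
   with an earlier letter of p, whereas a starting letter of a reduced word
   commutes with everything before it; so v0 is the only starting generator.
   Equality in G(Gamma) is decided by the reducing cons [wcons]: reduced forms
   of equal words have equal projections onto every pair of non-commuting
   vertices, which determines their length and their support. *)

From mathcomp Require Import all_boot.
From mathcomp Require Import boolp.
From Stdlib Require Import Relation_Operators.

Set Implicit Arguments.
Unset Strict Implicit.
Unset Printing Implicit Defensive.

Section Rem.
Variable T : eqType.

Lemma filter_rem (p : pred T) y s :
  filter p (rem y s) = if p y then rem y (filter p s) else filter p s.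
Proof.
elim: s => [|z s IH] /=; first by case: ifP.
case: (eqVneq z y) => [->|ne] /=; first by case: (p y) => /=; rewrite ?eqxx.
by rewrite IH; case: (p z); case: (p y) => /=; rewrite ?(negbTE ne).
Qed.

Lemma rem_cat_notin (y : T) s1 s2 : y \notin s1 -> rem y (s1 ++ s2) = s1 ++ rem y s2.
Proof.
elim: s1 => //= z s1 IH; rewrite in_cons negb_or => /andP[ne /IH ->].
by rewrite eq_sym (negbTE ne).
Qed.

End Rem.

Section WordEquality.
Variables (T : finType) (e : rel T).

Local Notation letter := (letter T).
Local Notation word := (word T).
Local Notation weq := (weq e).

Lemma linvK : involutive (@linv T).
Proof. by case=> v b; rewrite /linv /= negbK. Qed.

Lemma linv_neq (x : letter) : x != linv x.
Proof. by case: x => v [] /=; rewrite /linv /= xpair_eqE eqxx. Qed.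

Lemma weq_refl s : weq s s. Proof. exact: rst_refl. Qed.
Lemma weq_sym s t : weq s t -> weq t s. Proof. exact: rst_sym. Qed.
Lemma weq_trans s t u : weq s t -> weq t u -> weq s u. Proof. exact: rst_trans. Qed.
Lemma weq_step s t : wstep e s t -> weq s t. Proof. exact: rst_step. Qed.

Lemma weq_hom (f : word -> word) :
  (forall s t, wstep e s t -> wstep e (f s) (f t)) ->
  forall s t, weq s t -> weq (f s) (f t).
Proof.
move=> fP s t; elim=> [u v /fP/weq_step //|u|u v _|u v w _ IH1 _ IH2].
- exact: weq_refl.
- exact: weq_sym.
- exact: weq_trans IH2.
Qed.

Lemma weq_catl p s t : weq s t -> weq (p ++ s) (p ++ t).
Proof.
apply: weq_hom => {}s {}t [w1 w2 x|w1 w2 x y exy].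
  by rewrite !catA -(catA _ _ w2); apply: wstep_cancel.
by rewrite !catA -!(catA _ _ w2); apply: wstep_comm.
Qed.

Lemma weq_catr q s t : weq s t -> weq (s ++ q) (t ++ q).
Proof.
apply: (@weq_hom (cat^~ q)) => {}s {}t [w1 w2 x|w1 w2 x y exy].
  by rewrite -!catA; apply: wstep_cancel.
by rewrite -!catA; apply: wstep_comm.
Qed.

Lemma weq_cat s s' t t' : weq s s' -> weq t t' -> weq (s ++ t) (s' ++ t').
Proof. by move=> /(weq_catr t) H1 /(weq_catl s') H2; apply: weq_trans H2. Qed.

Lemma weq_cancel x : weq [:: x; linv x] [::].
Proof. by apply: weq_step; have := wstep_cancel e [::] [::] x. Qed.

Lemma weq_mulrV (s : word) : weq (s ++ winv s) [::].
Proof.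
elim: s => [|x s IH] /=; first exact: weq_refl.
have -> : winv (x :: s) = winv s ++ [:: linv x] by rewrite /winv /= rev_cons cats1.
apply: weq_trans (weq_cancel x); rewrite catA.
exact: (weq_catl [:: x] (weq_catr [:: linv x] IH)).
Qed.

Lemma winvK : involutive (@winv T).
Proof. by move=> s; rewrite /winv map_rev revK -map_comp (eq_map linvK) map_id. Qed.

Lemma weq_mulVr (s : word) : weq (winv s ++ s) [::].
Proof. by have := weq_mulrV (winv s); rewrite winvK. Qed.

Lemma weq_catl_cancel s t t' : weq (s ++ t) (s ++ t') -> weq t t'.
Proof.
move=> /(weq_catl (winv s)); rewrite !catA => H.
have mulVs r : weq ((winv s ++ s) ++ r) r by have := weq_catr r (weq_mulVr s).
exact: weq_trans (weq_sym (mulVs t)) (weq_trans H (mulVs t')).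
Qed.

Lemma weq_conjr s t a : weq (s ++ a) (a ++ t) -> weq s (a ++ t ++ winv a).
Proof.
move=> H; have := weq_catl s (weq_sym (weq_mulrV a)).
by rewrite cats0 catA => /weq_trans; apply; rewrite catA; apply: weq_catr.
Qed.

Lemma weq_conjl s t b : weq (t ++ b) (b ++ s) -> weq s (winv b ++ t ++ b).
Proof.
move=> H; have := weq_catr s (weq_sym (weq_mulVr b)).
by rewrite -catA => /weq_trans; apply; apply/weq_catl/weq_sym.
Qed.

Lemma wpowS (w : word) n : wpow w n.+1 = w ++ wpow w n.
Proof. by []. Qed.

Lemma wpowD (w : word) m n : wpow w (m + n) = wpow w m ++ wpow w n.
Proof. by elim: m => [|m IH] //; rewrite addSn !wpowS IH catA. Qed.

Lemma wpowSr (w : word) n : wpow w n.+1 = wpow w n ++ w.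
Proof. by rewrite -addn1 wpowD /wpow /= cats0. Qed.

Lemma size_wpow (w : word) n : size (wpow w n) = n * size w.
Proof. by elim: n => //= n IH; rewrite wpowS size_cat IH mulSn. Qed.

Lemma weq_wpow (s t : word) n : weq s t -> weq (wpow s n) (wpow t n).
Proof.
by move=> H; elim: n => [|n IH]; [apply: weq_refl | rewrite !wpowS; apply: weq_cat].
Qed.

End WordEquality.

Section NormalForm.
Variables (T : finType) (e : rel T).
Hypothesis e_sym : symmetric e.

Local Notation letter := (letter T).
Local Notation word := (word T).
Local Notation weq := (weq e).

Definition dep (u v : T) := (u == v) || e u v.

Lemma dep_sym u v : dep u v = dep v u.
Proof. by rewrite /dep eq_sym e_sym. Qed.

Lemma dep_refl u : dep u u.
Proof. by rewrite /dep eqxx. Qed.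

Definition indep (x : letter) (s : word) := all (fun z => ~~ dep z.1 x.1) s.

Lemma indepN x s : indep x s = ~~ has (fun z => dep z.1 x.1) s.
Proof. exact: all_predC. Qed.

Lemma linv_notin_indep x s : indep x s -> linv x \notin s.
Proof. by move=> /allP Hs; apply/negP => /Hs; rewrite dep_refl. Qed.

Lemma weq_cons_indep x s t : indep x s -> weq (x :: s ++ t) (s ++ x :: t).
Proof.
elim: s => [|z s IH] /=; first by move=> _; apply: weq_refl.
case/andP=> dz /IH Hs.
have exz : ~~ e x.1 z.1 by apply: contra dz; rewrite /dep e_sym => ->; rewrite orbT.
apply: weq_trans (weq_step (wstep_comm [::] (s ++ t) exz)) _.
exact: (weq_catl [:: z] Hs).
Qed.

Definition wproj (u v : T) (s : word) := [seq z <- s | (z.1 == u) || (z.1 == v)].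

Definition proj_eq (s t : word) := forall u v, dep u v -> wproj u v s = wproj u v t.

Lemma proj_eq_refl s : proj_eq s s.
Proof. by []. Qed.

Lemma proj_eq_sym s t : proj_eq s t -> proj_eq t s.
Proof. by move=> H u v d; rewrite H. Qed.

Lemma proj_eq_trans s t r : proj_eq s t -> proj_eq t r -> proj_eq s r.
Proof. by move=> H1 H2 u v d; rewrite H1 ?H2. Qed.

Lemma wproj_indep x s u v :
  indep x s -> dep u v -> (x.1 == u) || (x.1 == v) -> wproj u v s = [::].
Proof.
move=> /allP Hs duv Hx; rewrite /wproj -(filter_pred0 s); apply: eq_in_filter => z /Hs.
apply: contraNF; case/orP: Hx => /eqP-> /orP[]/eqP->; by rewrite ?dep_refl // dep_sym.
Qed.

Lemma proj_eq_indep_cons x s t : indep x s -> proj_eq (x :: s ++ t) (s ++ x :: t).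
Proof.
move=> Hs u v duv; have Hproj := wproj_indep Hs duv.
rewrite /wproj /= !filter_cat /=; case: ifP => // /Hproj.
by rewrite /wproj => ->.
Qed.

Lemma size_proj_eq s t : proj_eq s t -> size s = size t.
Proof.
move=> H; apply: perm_size; apply/allP => z _; apply/eqP.
have count_proj r : count_mem z r = count_mem z (wproj z.1 z.1 r).
  by rewrite /wproj count_filter; apply: eq_count => y /=; case: eqP => // ->; rewrite eqxx.
by rewrite (count_proj s) (count_proj t) H // dep_refl.
Qed.

Lemma mem_proj_eq s t v : proj_eq s t -> (v \in map fst s) = (v \in map fst t).
Proof.
move=> H; have mem_proj r : (v \in map fst r) = (wproj v v r != [::]).
  rewrite /wproj -has_filter; apply/mapP/hasP => [[z zr ->]|[z zr]].
    by exists z; rewrite ?eqxx.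
  by rewrite orbb => /eqP <-; exists z.
by rewrite (mem_proj s) (mem_proj t) H // dep_refl.
Qed.

Definition cancels (x : letter) (s : word) :=
  ohead [seq z <- s | dep z.1 x.1] == Some (linv x).

Lemma cancels_proj x s :
  cancels x s <-> (forall v, dep x.1 v -> ohead (wproj x.1 v s) = Some (linv x)).
Proof.
elim: s => [|z s IH]; first by split=> // /(_ x.1 (dep_refl _)).
rewrite /cancels /=; case: ifP => dz.
  split=> [/eqP[zx] v _|/(_ z.1)]; first by rewrite /wproj /= zx eqxx.
  by rewrite dep_sym dz /wproj /= eqxx orbT => /(_ isT) [->].
have skip v : dep x.1 v -> (z.1 == x.1) || (z.1 == v) = false.
  move=> dv; apply: contraFF dz => /orP[]/eqP->; by rewrite ?dep_refl // dep_sym.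
by rewrite -/(cancels x s) IH; split=> H v dv; have := H v dv; rewrite /wproj /= skip.
Qed.

Lemma cancels_eq_proj x s t :
  (forall v, dep x.1 v -> wproj x.1 v s = wproj x.1 v t) -> cancels x s = cancels x t.
Proof.
move=> H; apply/idP/idP => /cancels_proj C; apply/cancels_proj => v dv.
  by rewrite -H // C.
by rewrite H // C.
Qed.

Lemma cancels_proj_eq x s t : proj_eq s t -> cancels x s = cancels x t.
Proof. by move=> H; apply: cancels_eq_proj => v; apply: H. Qed.

Lemma cancels_split x s : cancels x s ->
  exists s1 s2, s = s1 ++ linv x :: s2 /\ indep x s1.
Proof.
elim: s => [|z s IH] //; rewrite /cancels /=; case: ifP => dz.
  by move/eqP=> [] ->; exists [::], s.
by move=> /IH [s1 [s2 [-> H]]]; exists (z :: s1), s2; rewrite /indep /= dz.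
Qed.

Lemma cancels_cat_indep x s t : indep x s -> cancels x (s ++ t) = cancels x t.
Proof. by rewrite indepN /cancels filter_cat has_filter; case: filter. Qed.

Lemma cancels_cat_dep x s t :
  has (fun z => dep z.1 x.1) s -> cancels x (s ++ t) = cancels x s.
Proof. by rewrite /cancels filter_cat has_filter; case: filter. Qed.

Lemma cancels_cat_self x s t : cancels x (s ++ x :: t) = cancels x s.
Proof.
have [Hs|Hs] := boolP (has (fun z => dep z.1 x.1) s); first exact: cancels_cat_dep.
rewrite cancels_cat_indep ?indepN // /cancels /= dep_refl /=.
move: Hs; rewrite has_filter negbK => /eqP ->.
by rewrite (inj_eq (@Some_inj _)) (negbTE (linv_neq x)).
Qed.

Lemma cancels_has x s : cancels x s -> has (fun z => dep z.1 x.1) s.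
Proof. by rewrite /cancels has_filter; case: filter. Qed.

Definition wcons (x : letter) (s : word) :=
  if cancels x s then rem (linv x) s else x :: s.

Definition wred (s : word) := foldr wcons [::] s.

Fixpoint reduced (s : word) :=
  if s is x :: s' then ~~ cancels x s' && reduced s' else true.

Lemma reduced_catr s t : reduced (s ++ t) -> reduced t.
Proof. by elim: s => //= x s IH /andP[_ /IH]. Qed.

Lemma reduced_catl s t : reduced (s ++ t) -> reduced s.
Proof.
elim: s => //= x s IH /andP[c /IH ->]; rewrite andbT.
by apply: contra c => c; rewrite cancels_cat_dep // cancels_has.
Qed.

Lemma reduced_rem x s : reduced s -> cancels x s -> reduced (rem (linv x) s).
Proof.
move=> R /cancels_split [s1 [s2 [Es Hs1]]]; subst s.
rewrite rem_cat_notin ?linv_notin_indep //= eqxx.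
elim: s1 Hs1 R => [|z s1 IH] /=; first by move=> _ /andP[].
move=> /andP[dz Hs1] /andP[c R]; rewrite IH // andbT.
suff <- : cancels z (s1 ++ linv x :: s2) = cancels z (s1 ++ s2) by [].
by rewrite /cancels !filter_cat /= dep_sym (negbTE dz).
Qed.

Lemma reduced_wcons x s : reduced s -> reduced (wcons x s).
Proof. by rewrite /wcons; case: ifP => c R; [apply: reduced_rem | rewrite /= c]. Qed.

Lemma wred_reduced s : reduced (wred s).
Proof. by elim: s => //= x s IH; apply: reduced_wcons. Qed.

Lemma wred_id s : reduced s -> wred s = s.
Proof. by elim: s => //= x s IH /andP[c /IH ->]; rewrite /wcons (negbTE c). Qed.

Lemma size_wcons x s :
  size (wcons x s) = if cancels x s then (size s).-1 else (size s).+1.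
Proof.
rewrite /wcons; case: ifP => // c; apply: size_rem.
by have [s1 [s2 [-> _]]] := cancels_split c; rewrite mem_cat mem_head orbT.
Qed.

Lemma size_wred s : size (wred s) <= size s.
Proof.
elim: s => //= x s IH; rewrite size_wcons; case: ifP => _ //.
exact: leq_trans (leq_pred _) (leq_trans IH _).
Qed.

Lemma size_wred_reduced s : size (wred s) = size s -> reduced s.
Proof.
elim: s => //= x s IH; rewrite size_wcons; case: ifP => c E.
  by have := leq_trans (leq_pred _) (size_wred s); rewrite E ltnn.
by case: E => /IH R; move: c; rewrite R (wred_id R) andbT => ->.
Qed.

Lemma wproj_wcons u v x s :
  wproj u v (wcons x s) =
  if (x.1 == u) || (x.1 == v) then
    (if cancels x s then rem (linv x) (wproj u v s) else x :: wproj u v s)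
  else wproj u v s.
Proof.
by rewrite /wcons /wproj; case: ifP => c; case: ifP => px /=; rewrite ?filter_rem /= ?px.
Qed.

Lemma wcons_proj_eq x s t : proj_eq s t -> proj_eq (wcons x s) (wcons x t).
Proof. by move=> H u v duv; rewrite !wproj_wcons H // (cancels_proj_eq x H). Qed.

Lemma wcons_linv x r : reduced r -> proj_eq (wcons x (wcons (linv x) r)) r.
Proof.
move=> R; rewrite {2}/wcons; case: ifP => c; last first.
  by rewrite /wcons /cancels /= dep_refl /= !eqxx.
have [s1 [s2 [Er Hs1]]] := cancels_split c; rewrite linvK in Er; subst r.
have x_s1 : x \notin s1 by rewrite -[x]linvK linv_notin_indep.
rewrite linvK rem_cat_notin //= eqxx /wcons cancels_cat_indep //.
have /andP[/negbTE -> _] : reduced (x :: s2) := reduced_catr R.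
exact: proj_eq_indep_cons.
Qed.

Lemma eq_vertex_linv (x y : letter) : x.1 = y.1 -> x != y -> y = linv x.
Proof.
case: x y => [u b] [u' d] /= <- ne; rewrite /linv /=; congr pair.
by move: ne; case: b; case: d; rewrite ?eqxx.
Qed.

Lemma cancels_wcons_comm x y s :
  x.1 != y.1 -> ~~ e x.1 y.1 -> cancels x (wcons y s) = cancels x s.
Proof.
move=> n1 n2; apply: cancels_eq_proj => v dv; rewrite wproj_wcons.
case: ifP => // /orP[/eqP E|/eqP E]; first by rewrite E eqxx in n1.
by move: dv; rewrite -E /dep (negbTE n1) (negbTE n2).
Qed.

Lemma wcons_comm x y r : reduced r -> ~~ e x.1 y.1 ->
  proj_eq (wcons x (wcons y r)) (wcons y (wcons x r)).
Proof.
move=> R nxy; have [->|nexy] := eqVneq x y; first exact: proj_eq_refl.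
have [E1|ne1] := eqVneq x.1 y.1.
  rewrite (eq_vertex_linv E1 nexy); apply: proj_eq_trans (wcons_linv x R) _.
  by apply: proj_eq_sym; have := wcons_linv (linv x) R; rewrite linvK.
have nyx : ~~ e y.1 x.1 by rewrite e_sym.
have ne1' : y.1 != x.1 by rewrite eq_sym.
move=> u v duv; rewrite !wproj_wcons !cancels_wcons_comm //.
case px: ((x.1 == u) || (x.1 == v)); case py: ((y.1 == u) || (y.1 == v)) => //.
have ndep : ~~ dep x.1 y.1 by rewrite /dep negb_or ne1.
exfalso; move/orP: px => [] /eqP Ex; move/orP: py => [] /eqP Ey.
- by move: ne1; rewrite Ex Ey eqxx.
- by move: ndep; rewrite Ex Ey duv.
- by move: ndep; rewrite Ex Ey dep_sym duv.
- by move: ne1; rewrite Ex Ey eqxx.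
Qed.

Lemma wred_weq s t : weq s t -> proj_eq (wred s) (wred t).
Proof.
have wred_cat u r : wred (u ++ r) = foldr wcons (wred r) u by rewrite /wred foldr_cat.
have foldr_proj_eq u r r' : proj_eq r r' -> proj_eq (foldr wcons r u) (foldr wcons r' u).
  by elim: u => //= x u IH /IH; apply: wcons_proj_eq.
elim=> [{}s {}t []|u|u v _|u v r _ IH1 _ IH2].
- move=> w1 w2 x; rewrite !wred_cat; apply: foldr_proj_eq.
  exact: wcons_linv (wred_reduced _).
- move=> w1 w2 x y exy; rewrite !wred_cat; apply: foldr_proj_eq.
  exact: wcons_comm (wred_reduced _) exy.
- exact: proj_eq_refl.
- exact: proj_eq_sym.
- exact: proj_eq_trans IH2.
Qed.

Lemma weq_wcons x s : weq (x :: s) (wcons x s).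
Proof.
rewrite /wcons; case: ifP => c; last exact: weq_refl.
have [s1 [s2 [-> Hs1]]] := cancels_split c.
rewrite rem_cat_notin ?linv_notin_indep //= eqxx.
apply: weq_trans (weq_cons_indep _ Hs1) _.
exact: (weq_catl s1 (weq_catr s2 (weq_cancel e x))).
Qed.

Lemma weq_wred s : weq s (wred s).
Proof.
elim: s => /= [|x s IH]; first exact: weq_refl.
exact: weq_trans (weq_catl [:: x] IH) (weq_wcons x (wred s)).
Qed.

Lemma wlen_wred s : wlen e s = size (wred s).
Proof.
rewrite /wlen; case: ex_minnP => m /asboolP [s' [Ws <-]] Hmin.
apply/eqP; rewrite eqn_leq; apply/andP; split.
  by apply: Hmin; apply/asboolP; exists (wred s); split => //; apply: weq_wred.
by rewrite (size_proj_eq (wred_weq Ws)) size_wred.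
Qed.

Lemma wlen_weq s t : weq s t -> wlen e s = wlen e t.
Proof. by move=> H; rewrite !wlen_wred (size_proj_eq (wred_weq H)). Qed.

Lemma wlen_reduced s : reduced s -> wlen e s = size s.
Proof. by move=> R; rewrite wlen_wred wred_id. Qed.

Lemma wlen_lt_size s : ~~ reduced s -> wlen e s < size s.
Proof.
move=> nR; rewrite wlen_wred ltn_neqAle size_wred andbT.
by apply: contra nR => /eqP /size_wred_reduced.
Qed.

Lemma reduced_weq s t : reduced s -> weq s t -> size s = size t -> reduced t.
Proof.
move=> R H E; apply: size_wred_reduced.
by rewrite -wlen_wred -(wlen_weq H) wlen_reduced.
Qed.

Lemma reduced_proj_eq s t : reduced s -> reduced t -> weq s t -> proj_eq s t.
Proof. by move=> Rs Rt /wred_weq; rewrite !wred_id. Qed.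

Lemma supp_wred g v : supp e g v <-> v \in map fst (wred g).
Proof.
split=> [[s [Ws [Ls v_s]]]|v_g]; last first.
  by exists (wred g); rewrite wlen_wred; split => //; apply: weq_wred.
have Rs : reduced s.
  by apply: size_wred_reduced; rewrite -wlen_wred Ls (wlen_weq Ws).
by rewrite (mem_proj_eq v (wred_weq Ws)) wred_id.
Qed.

Lemma start_gen_cons x s : reduced (x :: s) -> start_gen e (x :: s) x.1.
Proof.
move=> R; exists x.2, s; rewrite -surjective_pairing; split; first exact: weq_refl.
by rewrite !wlen_reduced //; case/andP: R.
Qed.

Lemma start_gen_reduced q v : reduced q -> start_gen e q v ->
  exists s1 y s2, [/\ q = s1 ++ y :: s2, y.1 = v & indep y s1].
Proof.
move=> Rq [eps [h [Wq Lq]]]; set y := (v, eps).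
have Wy : weq q (y :: wred h) := weq_trans Wq (weq_catl [:: y] (weq_wred h)).
have Ry : reduced (y :: wred h).
  by apply: (reduced_weq Rq Wy); rewrite -(wlen_reduced Rq) Lq (wlen_wred h) wlen_reduced.
have : cancels (linv y) q.
  by rewrite (cancels_proj_eq _ (reduced_proj_eq Rq Ry Wy)) /cancels /= dep_refl linvK.
by case/cancels_split => s1 [s2 [Eq Hs1]]; exists s1, y, s2; rewrite linvK in Eq.
Qed.

Lemma reduced_cat_intro s t : reduced t ->
  (forall s1 x s2, s = s1 ++ x :: s2 -> ~~ cancels x (s2 ++ t)) -> reduced (s ++ t).
Proof.
elim: s => //= x s IH Rt H; rewrite (H [::] x s) //= IH //.
by move=> s1 y s2 E; apply: (H (x :: s1)); rewrite E.
Qed.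

Lemma reduced_wpow w : reduced (w ++ w) -> forall n, reduced (wpow w n).
Proof.
move=> Rww; elim=> [|[|n] IH] //; first by rewrite /wpow /= cats0; apply: reduced_catl Rww.
rewrite wpowS; apply: reduced_cat_intro => // s1 x s2 Ew.
rewrite wpowS catA cancels_cat_dep; last first.
  by apply/hasP; exists x; rewrite ?dep_refl // Ew mem_cat mem_cat mem_head !orbT.
by move: Rww; rewrite {1}Ew -catA => /reduced_catr /= /andP[].
Qed.

Lemma reduced_cat_cyclic w : reduced w ->
  (forall h, size w <= wlen e (h ++ w ++ winv h)) -> reduced (w ++ w).
Proof.
(* A letter [x] of the first copy that cancels across the junction commutes
   with the rest [s2] of that copy; conjugating [w] by [x] then gives the
   non-reduced word [x s1 s2], of length [size w]. *)
move=> Rw Hc; apply: reduced_cat_intro => // s1 x s2 Ew; apply/negP => C.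
have [Hd|Hi] := boolP (has (fun z => dep z.1 x.1) s2).
  by move: Rw C; rewrite Ew cancels_cat_dep // => /reduced_catr /andP[/negP].
rewrite -indepN in Hi.
have C1 : cancels x (s1 ++ s2).
  move: C; rewrite cancels_cat_indep // Ew cancels_cat_self => C.
  by rewrite cancels_cat_dep // cancels_has.
have Wconj : weq ([:: x] ++ w ++ winv [:: x]) (x :: s1 ++ s2).
  have Ww : weq w (s1 ++ s2 ++ [:: x]).
    by rewrite Ew; apply: weq_catl; have := weq_cons_indep [::] Hi; rewrite cats0.
  apply: weq_trans (weq_catl [:: x] (weq_catr [:: linv x] Ww)) _.
  have := weq_catl (x :: s1 ++ s2) (weq_cancel e x); by rewrite cats0 /= -!catA.
have := Hc [:: x]; rewrite (wlen_weq Wconj).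
have := @wlen_lt_size (x :: s1 ++ s2); rewrite /= C1 => /(_ isT).
rewrite Ew !size_cat /= addnS => H1 H2.
by have := leq_ltn_trans H2 H1; rewrite ltnn.
Qed.

Lemma cyc_reduced_wred g : cyc_reduced e g -> reduced (wred g ++ wred g).
Proof.
move=> CR; apply: reduced_cat_cyclic (wred_reduced g) _ => h.
rewrite -wlen_wred -(wlen_weq (weq_catl h (weq_catr (winv h) (weq_wred g)))).
exact: CR.
Qed.

End NormalForm.

Section Cone.
Variables (T : finType) (e : rel T).
Hypothesis e_sym : symmetric e.
Variable v0 : T.

Local Notation letter := (letter T).
Local Notation word := (word T).
Local Notation dep := (dep e).

Definition joins (vs : seq T) (u : T) := (u == v0) || has (dep u) vs.

(* [(cone_split vs s).1] is the free part and [(cone_split vs s).2] the cone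
   part of [s], [vs] being the vertices already in the cone. *)
Fixpoint cone_split (vs : seq T) (s : word) : word * word :=
  if s is z :: s' then
    if joins vs z.1 then
      ((cone_split (rcons vs z.1) s').1, z :: (cone_split (rcons vs z.1) s').2)
    else (z :: (cone_split vs s').1, (cone_split vs s').2)
  else ([::], [::]).

Lemma joins_sub vs vs' u : {subset vs <= vs'} -> joins vs u -> joins vs' u.
Proof.
rewrite /joins => S /orP[-> //|/hasP[v /S v_vs' d]].
by apply/orP; right; apply/hasP; exists v.
Qed.

Lemma joins_rcons vs u v : joins vs u -> joins (rcons vs v) u.
Proof. by apply: joins_sub => x; rewrite mem_rcons in_cons => ->; rewrite orbT. Qed.

Lemma cone_split_cat vs s t :
  cone_split vs (s ++ t) =
  ((cone_split vs s).1 ++ (cone_split (vs ++ map fst (cone_split vs s).2) t).1,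
   (cone_split vs s).2 ++ (cone_split (vs ++ map fst (cone_split vs s).2) t).2).
Proof.
elim: s vs => [|z s IH] vs /=; first by rewrite cats0; case: cone_split.
by case: ifP => _; rewrite IH //= cat_rcons.
Qed.

Lemma free_indep vs s y : y \in (cone_split vs s).1 -> ~~ has (dep y.1) vs.
Proof.
elim: s vs => //= z s IH vs; case: ifP => J /=.
  by move=> /IH; rewrite has_rcons negb_or => /andP[].
rewrite in_cons => /orP[/eqP ->|/IH //].
by move/negbT: J; rewrite /joins negb_or => /andP[].
Qed.

Lemma free_nil vs s : (forall y, y \in s -> joins vs y.1) -> (cone_split vs s).1 = [::].
Proof.
elim: s vs => //= z s IH vs H; rewrite H ?mem_head //=.
by apply: IH => y ys; apply/joins_rcons/H; rewrite in_cons ys orbT.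
Qed.

Lemma cone_split_ext vs1 vs2 s :
  (forall y, y \in s -> has (dep y.1) vs1 = has (dep y.1) vs2) ->
  cone_split vs1 s = cone_split vs2 s.
Proof.
elim: s vs1 vs2 => //= z s IH vs1 vs2 H.
have -> : joins vs1 z.1 = joins vs2 z.1 by rewrite /joins H ?mem_head.
have Hs y : y \in s -> has (dep y.1) vs1 = has (dep y.1) vs2.
  by move=> ys; apply: H; rewrite in_cons ys orbT.
rewrite (IH (rcons vs1 z.1) (rcons vs2 z.1)) ?(IH vs1 vs2) // => y ys.
by rewrite !has_rcons Hs.
Qed.

Lemma free_of_free vs vs' s : {subset vs <= vs'} ->
  (cone_split vs' s).1 = (cone_split vs' (cone_split vs s).1).1.
Proof.
elim: s vs vs' => //= z s IH vs vs' S.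
case J: (joins vs z.1).
  have S' : {subset rcons vs z.1 <= rcons vs' z.1}.
    by move=> x; rewrite !mem_rcons !in_cons => /orP[-> //|/S ->]; rewrite orbT.
  rewrite /= (joins_sub S J) /= (IH _ _ S'); congr fst.
  apply: cone_split_ext => y /free_indep.
  by rewrite !has_rcons negb_or => /andP[/negbTE ->].
case J': (joins vs' z.1) => /=; rewrite J' /=; last by rewrite (IH _ _ S).
by apply: IH => x /S; rewrite mem_rcons in_cons => ->; rewrite orbT.
Qed.

Lemma weq_cone_split vs s : weq e s ((cone_split vs s).1 ++ (cone_split vs s).2).
Proof.
elim: s vs => [|z s IH] vs /=; first exact: weq_refl.
case: ifP => J /=; last exact: (weq_catl [:: z] (IH vs)).
apply: weq_trans (weq_catl [:: z] (IH (rcons vs z.1))) _.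
apply: weq_cons_indep => //; apply/allP => y /free_indep.
by rewrite has_rcons negb_or => /andP[].
Qed.

Lemma size_cone_split vs s : size (cone_split vs s).1 + size (cone_split vs s).2 = size s.
Proof. by elim: s vs => //= z s IH vs; case: ifP => _ /=; rewrite ?addnS ?addSn IH. Qed.

Lemma cone_joins vs s U1 z U2 :
  (cone_split vs s).2 = U1 ++ z :: U2 -> joins (vs ++ map fst U1) z.1.
Proof.
elim: s vs U1 => [|z' s IH] vs U1 /=; first by case: U1.
case: ifP => J /=; last exact: IH.
case: U1 => [|y U1] /= [<-]; first by rewrite cats0.
by move=> /IH; rewrite cat_rcons.
Qed.

Lemma cone_nonempty vs s : has (fun y => y.1 == v0) s -> (cone_split vs s).2 != [::].
Proof.
elim: s vs => //= z s IH vs; case: ifP => J //= /orP[H|/IH //].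
by move: J; rewrite /joins H.
Qed.

Lemma mem_cone vs s y :
  y \in s -> joins vs y.1 -> y.1 \in vs ++ map fst (cone_split vs s).2.
Proof.
elim: s vs => //= z s IH vs; rewrite in_cons => /orP[/eqP ->|ys] J.
  by rewrite J /= mem_cat in_cons eqxx !orbT.
case: ifP => _ /=; last exact: IH.
by rewrite -cat_rcons; apply: IH => //; apply: joins_rcons.
Qed.

End Cone.

Section ConeOfPowers.
Variables (T : finType) (e : rel T) (v0 : T) (w : word T).
Hypothesis e_sym : symmetric e.

Definition cone_vertices n := map fst (cone_split e v0 [::] (wpow w n)).2.

Lemma cone_vertices_mono m n : m <= n -> {subset cone_vertices m <= cone_vertices n}.
Proof.
move=> /subnKC <- v.
by rewrite /cone_vertices wpowD cone_split_cat map_cat mem_cat => ->.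
Qed.

Lemma cone_vertices_step n y :
  y \in w -> joins e v0 (cone_vertices n) y.1 -> y.1 \in cone_vertices n.+1.
Proof.
move=> yw J; rewrite /cone_vertices wpowSr cone_split_cat map_cat.
exact: mem_cone yw J.
Qed.

(* Only sources are required to be letters of [w]: on a path from [v0], every
   vertex but the last one is a source. *)
Definition supp_edge : rel T := [rel u v | e u v && (u \in map fst w)].

Lemma joins_path p : path supp_edge v0 p ->
  joins e v0 (cone_vertices (size p)) (last v0 p).
Proof.
elim/last_ind: p => [|p y IH]; first by rewrite /joins eqxx.
rewrite rcons_path last_rcons size_rcons => /andP[/IH J /andP[exy /mapP[z zw Ez]]].
apply/orP; right; apply/hasP; exists (last v0 p); last by rewrite /dep e_sym exy orbT.
by rewrite Ez; apply: cone_vertices_step; rewrite -?Ez.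
Qed.

Lemma joins_connected :
  (forall u, u \in map fst w -> connect supp_edge v0 u) ->
  forall y, y \in w -> joins e v0 (cone_vertices #|T|.-1) y.1.
Proof.
move=> conn y /(map_f fst) /conn /connectP[p0 /shortenP[p Hp Up _] ->].
apply: joins_sub (joins_path Hp); apply: cone_vertices_mono.
have := max_card (mem (v0 :: p)); rewrite (card_uniqP Up) /=.
by case: #|T| => // n; rewrite ltnS.
Qed.

End ConeOfPowers.

Lemma nonsplit_connect (T : finType) (e : rel T) (g : word T) (v0 : T) :
  symmetric e -> nonsplit e g -> supp e g v0 ->
  forall u, u \in map fst (wred e g) -> connect (supp_edge e (wred e g)) v0 u.
Proof.
move=> e_sym NS Sv0 u /(supp_wred e_sym) Su.
elim: (NS v0 u Sv0 Su) => [x y [exy [Sx _]]|x|x y z _ IHxy _ IHyz].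
- by apply: connect1; rewrite /supp_edge /= exy; apply/(supp_wred e_sym).
- exact: connect0.
- exact: connect_trans IHyz.
Qed.

Section Decomposition.
Variables (T : finType) (e : rel T) (v0 : T) (w : word T) (k : nat).
Hypotheses (e_sym : symmetric e) (Rww : reduced e (w ++ w)) (v0_w : v0 \in map fst w).
Hypothesis w_joins : forall y, y \in w -> joins e v0 (cone_vertices e v0 w k) y.1.

Local Notation weq := (weq e).
Local Notation cone_split := (cone_split e v0).

Let a := (cone_split [::] (wpow w k)).1.
Let b := (cone_split [::] (wpow w k)).2.
Let p := (cone_split [::] (w ++ a)).2.

Lemma free_absorbed : (cone_split [::] (w ++ a)).1 = a.
Proof.
(* Both sides are the free part of [w^(k+1)], split as [w^k ++ w] and as [w ++ w^k]. *)
have absorb : (cone_split [::] (wpow w k.+1)).1 = a.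
  by rewrite wpowSr cone_split_cat /= [(cone_split _ w).1]free_nil ?cats0.
rewrite -{2}absorb wpowS !cone_split_cat /=.
by rewrite (@free_of_free _ _ v0 [::] _ (wpow w k)).
Qed.

Lemma weq_wpow_free_cone : weq (wpow w k) (a ++ b).
Proof. exact: weq_cone_split. Qed.

Lemma weq_conj_free : weq (w ++ a) (a ++ p).
Proof. by have := weq_cone_split e_sym v0 [::] (w ++ a); rewrite free_absorbed. Qed.

Lemma size_cone : size p = size w.
Proof.
have := size_cone_split e v0 [::] (w ++ a).
by rewrite free_absorbed size_cat [size w + _]addnC => /addnI.
Qed.

Lemma weq_conj_cone : weq (p ++ b) (b ++ w).
Proof.
apply: (@weq_catl_cancel _ _ a); rewrite catA.
apply: weq_trans (weq_catr b (weq_sym weq_conj_free)) _.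
rewrite -catA; apply: weq_trans (weq_catl w (weq_sym weq_wpow_free_cone)) _.
by rewrite -wpowS wpowSr catA; apply: weq_catr; apply: weq_wpow_free_cone.
Qed.

Lemma weq_wpow_conj_cone n : weq (wpow p n ++ b) (b ++ wpow w n).
Proof.
elim: n => [|n IH]; first by rewrite /= cats0; apply: weq_refl.
rewrite !wpowS -catA; apply: weq_trans (weq_catl p IH) _.
by rewrite !catA; apply: weq_catr; apply: weq_conj_cone.
Qed.

Lemma reduced_free_cone_wpow : reduced e (a ++ b).
Proof.
apply: (reduced_weq e_sym (reduced_wpow Rww k) weq_wpow_free_cone).
by rewrite size_cat size_cone_split.
Qed.

Lemma reduced_free_cone : reduced e (a ++ p).
Proof.
have Rwab : reduced e (w ++ a ++ b).
  apply: (reduced_weq e_sym (reduced_wpow Rww k.+1) (weq_catl w weq_wpow_free_cone)).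
  by rewrite wpowS !size_cat size_cone_split.
have Rwa : reduced e (w ++ a) by move: Rwab; rewrite catA => /reduced_catl.
apply: (reduced_weq e_sym Rwa weq_conj_free).
by rewrite !size_cat size_cone addnC.
Qed.

Lemma conical_cone : conical e v0 p.
Proof.
have Rp : reduced e p := reduced_catr reduced_free_cone.
move=> v; split.
- case/(start_gen_reduced e_sym Rp) => s1 [y [s2 [Ep <- Hs1]]].
  have := cone_joins Ep; rewrite /joins /= has_map => /orP[/eqP // | /hasP[z z_s1 /= dyz]].
  by have := allP Hs1 z z_s1; rewrite /= (dep_sym e_sym) dyz.
- move=> ->; have : p != [::].
    apply: cone_nonempty; rewrite has_cat; apply/orP; left.
    by case/mapP: v0_w => y yw ->; apply/hasP; exists y.
  case Ep: p => [|z s] // _; have := cone_joins (U1 := [::]) Ep.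
  rewrite /joins /= orbF => /eqP <-; apply: (start_gen_cons e_sym); by rewrite -Ep.
Qed.

Variable g : word T.
Hypothesis g_w : weq g w.

Lemma wlen_wpow n : wlen e (wpow g n) = n * size w.
Proof.
rewrite (wlen_weq e_sym (weq_wpow n g_w)) (wlen_reduced e_sym (reduced_wpow Rww n)).
exact: size_wpow.
Qed.

Lemma conical_decomposition :
  exists p a b, [/\ conical e v0 p, weq g (a ++ p ++ winv a), weq g (winv b ++ p ++ b),
    geod2 e (wpow g k) a b &
    forall n, k <= n -> weq (wpow g n) (a ++ wpow p (n - k) ++ b) /\
      wlen e (wpow g n) = wlen e a + (n - k) * wlen e p + wlen e b].
Proof.
have [Ra Rb] : reduced e a /\ reduced e b.
  have R := reduced_free_cone_wpow.
  by split; [apply: reduced_catl R | apply: reduced_catr R].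
have Rp : reduced e p := reduced_catr reduced_free_cone.
have Sab : size a + size b = k * size w by rewrite size_cone_split size_wpow.
exists p, a, b; split.
- exact: conical_cone.
- exact: weq_trans g_w (weq_conjr weq_conj_free).
- exact: weq_trans g_w (weq_conjl weq_conj_cone).
- split; first exact: weq_trans (weq_wpow k g_w) weq_wpow_free_cone.
  by rewrite wlen_wpow !wlen_reduced.
move=> n kn; split.
  apply: weq_trans (weq_wpow n g_w) _; rewrite -(subnKC kn) wpowD subnKC //.
  apply: weq_trans (weq_catr _ weq_wpow_free_cone) _; rewrite -catA; apply: weq_catl.
  exact: weq_sym (weq_wpow_conj_cone _).
by rewrite wlen_wpow !wlen_reduced // size_cone addnAC Sab -mulnDl subnKC.
Qed.

End Decomposition.

Theorem proposition2p4 (T : finType) (e : rel T)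
  (e_sym : symmetric e) (e_irr : irreflexive e)
  (g : word T) (v0 : T) :
  nonsplit e g -> cyc_reduced e g -> supp e g v0 ->
  exists (p a b : word T) (k : nat),
    conical e v0 p /\
    weq e g (a ++ p ++ winv a) /\
    weq e g (winv b ++ p ++ b) /\
    k <= #|T|.-1 /\
    geod2 e (wpow g k) a b /\
    (forall n : nat, #|T| <= n ->
       weq e (wpow g n) (a ++ wpow p (n - k) ++ b) /\
       wlen e (wpow g n) = wlen e a + (n - k) * wlen e p + wlen e b).
Proof.
move=> NS CR Sv0.
have v0_w : v0 \in map fst (wred e g) by apply/(supp_wred e_sym).
have [p [a [b [Cp Wa Wb Gab Hn]]]] :=
  conical_decomposition e_sym (cyc_reduced_wred e_sym CR) v0_w
    (joins_connected e_sym (nonsplit_connect e_sym NS Sv0)) (weq_wred e_sym g).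
exists p, a, b, #|T|.-1; do 5?split => //.
by move=> n /(leq_trans (leq_pred _)); apply: Hn.
Qed.
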